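(* In the free-group setting described in the context, the extension $\pi_Y\circ\pi_f:X_f\to Y$ is point-distal.
   Context: Let $r\ge2$ and $\Gamma=F_r$ free on $S=\{a,b,a_3,\dots,a_r\}$. $Y$ is the Gromov boundary (infinite reduced words in $S\cup S^{-1}$, $\Gamma$ acting by concatenation and cancellation). For nontrivial $s\in\Gamma$, $y\in Y$ starts with $s$ if $y=sy'$ with the last letter of $s$ not inverse to the first letter of $y'$; $V_s$ is the set of such $y$; $a^\infty$ is the constant word $a$. Let $\{\Gamma_n\}$ be strictly decreasing finite-index normal subgroups with trivial intersection, $Z=\varprojlim\Gamma/\Gamma_n$ with left translation, $\pi_n:Z\to\Gamma/\Gamma_n$, $X=Y\times Z$ with product action, $\pi_Y:X\to Y$ the projection. For $n\ge2$ choose $\gamma_n\in\Gamma_{n-1}\setminus\Gamma_n$; $u_n=a^nba^{-n}b^{-1}$, $D_n=V_{u_n}$, $C_n=\pi_n^{-1}(\gamma_n\Gamma_n)$, $X_+=\bigcup_{n\ge2}D_n\times C_n$, $X_-=X\setminus(X_+\cup\{(a^\infty,e_\Gamma)\})$, $f=\pm1$ on $X_\pm$. $\pi_f:X_f\to X$ is the McMahon extension: the (unique up to conjugacy) minimal continuous action on a compact metrizable space with equivariant continuous surjection whose fibers are single points off $\Gamma(a^\infty,e_\Gamma)$ and two points on it, such that $f\circ\pi_f$ extends continuously to $X_f$. An extension $\pi:\tilde X\to Y$ is point-distal if there is $x\in\tilde X$ with dense orbit such that for every $x'\ne x$ with $\pi(x')=\pi(x)$ the orbit closure of $(x,x')$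 in $\tilde X^2$ misses the diagonal. *)

From HB Require Import structures.
From mathcomp Require Import all_boot all_order all_algebra.
From mathcomp Require Import all_classical all_reals topology normedtype.
Set Implicit Arguments. Unset Strict Implicit. Unset Printing Implicit Defensive.
Import Order.TTheory GRing.Theory Num.Theory.
Import numFieldNormedType.Exports.

(* Free group F_r with r = m.+2 generators (so r >= 2 for every m).         *)
(* A letter is (generator index, sign): (i,true) = a_i, (i,false) = a_i^-1. *)
Definition letter (m : nat) := ('I_m.+2 * bool)%type.
Definition linv {m} (x : letter m) : letter m := (x.1, ~~ x.2).
Definition word (m : nat) := seq (letter m).

(* reduced words = elements of Gamma *)
Definition reducedw {m} (w : word m) : bool :=
  if w is x :: w' then path (fun x y => y != linv x) x w' else true.

Definition cons_red {m} (x : letter m) (w : word m) : word m :=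
  if w is y :: w' then (if y == linv x then w' else x :: w) else [:: x].
Definition red {m} (w : word m) : word m := foldr cons_red [::] w.
Definition mul {m} (u v : word m) : word m := red (u ++ v).
Definition winv {m} (u : word m) : word m := rev (map linv u).

Definition ga {m} : letter m := (ord0, true).
Definition gb {m} : letter m := (lift ord0 ord0, true).

Definition uw {m} (n : nat) : word m :=
  nseq n ga ++ [:: gb] ++ nseq n (linv ga) ++ [:: linv gb].

(* Gromov boundary Y: infinite reduced words *)
Definition isY {m} (y : nat -> letter m) : Prop := forall k, y k.+1 != linv (y k).

(* number of cancellations between the reversed word l and the infinite word y *)
Fixpoint ncancel {m} (l : word m) (y : nat -> letter m) : nat :=
  if l is x :: l' then
    (if y 0%N == linv x then (ncancel l' (fun n => y n.+1)).+1 else 0%N)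
  else 0%N.

(* action of a reduced word g on Y by concatenation and cancellation *)
Definition actY {m} (g : word m) (y : nat -> letter m) : nat -> letter m :=
  let k := ncancel (rev g) y in
  let p := (size g - k)%N in
  fun n => if (n < p)%N then nth (y 0%N) g n else y (n - p + k)%N.

(* y starts with s (for y in Y, the non-cancellation condition is automatic) *)
Definition startsY {m} (s : word m) (y : nat -> letter m) : Prop :=
  forall k, (k < size s)%N -> y k = nth (y 0%N) s k.

(* Family {Gamma_n}_{n>=1} of strictly decreasing finite-index normal subgroups
   with trivial intersection (membership only matters on reduced words;
   the value at n = 0 is ignored). *)
Definition good_family {m} (G : nat -> word m -> Prop) : Prop :=
  [/\ forall n, (1 <= n)%N ->
        [/\ G n [::],
            forall u v, reducedw u -> reducedw v -> G n u -> G n v -> G n (mul u v),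
            forall u, reducedw u -> G n u -> G n (winv u),
            forall g u, reducedw g -> reducedw u -> G n u -> G n (mul (mul g u) (winv g))
          & exists s : seq (word m), forall g, reducedw g ->
              exists2 t, t \in s & reducedw t /\ G n (mul (winv t) g)],
      forall n, (1 <= n)%N ->
        (forall u, reducedw u -> G n.+1 u -> G n u) /\
        (exists u, [/\ reducedw u, G n u & ~ G n.+1 u])
    & forall u, reducedw u -> (forall n, (1 <= n)%N -> G n u) -> u = [::]].

Definition ceq {m} (G : nat -> word m -> Prop) (n : nat) (u v : word m) : Prop :=
  G n (mul (winv u) v).

(* Z = inverse limit of Gamma/Gamma_n, points represented by sequences of
   coset representatives z n (n >= 1), compatible: z_{n+1} Gamma_{n+1} ⊆ z_n Gamma_n *)
Definition isZ {m} (G : nat -> word m -> Prop) (z : nat -> word m) : Prop :=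
  (forall n, reducedw (z n)) /\ (forall n, (1 <= n)%N -> ceq G n (z n) (z n.+1)).

Definition ptX (m : nat) := ((nat -> letter m) * (nat -> word m))%type.

Definition isX {m} (G : nat -> word m -> Prop) (x : ptX m) : Prop :=
  isY x.1 /\ isZ G x.2.

Definition xeq {m} (G : nat -> word m -> Prop) (x x' : ptX m) : Prop :=
  (forall k, x.1 k = x'.1 k) /\ (forall n, (1 <= n)%N -> ceq G n (x.2 n) (x'.2 n)).

Definition actX {m} (g : word m) (x : ptX m) : ptX m :=
  (actY g x.1, fun n => mul g (x.2 n)).

Definition x0 {m} : ptX m := (fun _ => ga, fun _ => [::]).

Definition in_orbit0 {m} (G : nat -> word m -> Prop) (x : ptX m) : Prop :=
  exists g, reducedw g /\ xeq G x (actX g x0).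

(* basic neighbourhoods of X: agree on the first N letters of Y and on
   levels 1..N of Z *)
Definition agreeX {m} (G : nat -> word m -> Prop) (N : nat) (x x' : ptX m) : Prop :=
  (forall k, (k < N)%N -> x.1 k = x'.1 k) /\
  (forall n, (1 <= n <= N)%N -> ceq G n (x.2 n) (x'.2 n)).

(* X_+ = union_{n>=2} D_n x C_n, C_n = pi_n^{-1}(gamma_n Gamma_n) *)
Definition inXplus {m} (G : nat -> word m -> Prop) (gam : nat -> word m) (x : ptX m) : Prop :=
  exists n, [/\ (2 <= n)%N, startsY (uw n) x.1 & ceq G n (gam n) (x.2 n)].

Local Open Scope classical_set_scope.

Definition cont_action {m} (T : topologicalType) (act : word m -> T -> T) : Prop :=
  [/\ forall t, act [::] t = t,
      forall g h t, reducedw g -> reducedw h -> act (mul g h) t = act g (act h t)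
    & forall g, reducedw g -> continuous (act g)].

Definition orbit {m} (T : Type) (act : word m -> T -> T) (t : T) : set T :=
  [set s | exists g, reducedw g /\ s = act g t].

Definition minimal_action {m} (T : topologicalType) (act : word m -> T -> T) : Prop :=
  forall t, closure (orbit act t) = setT.

(* McMahon extension pi_f : X_f -> X (characterizing properties) *)
Definition mcmahon {m} (G : nat -> word m -> Prop) (gam : nat -> word m)
  (R : realType) (T : pseudoMetricType R) (act : word m -> T -> T)
  (pif : T -> ptX m) : Prop :=
  [/\ [/\ hausdorff_space T, compact [set: T],
      cont_action act & minimal_action act],
      (forall t, isX G (pif t))
      /\ (forall g t, reducedw g -> xeq G (pif (act g t)) (actX g (pif t)))
      /\ (forall t N, \forall t' \near t, agreeX G N (pif t) (pif t'))
      /\ (forall x, isX G x -> exists t, xeq G (pif t) x),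
      (forall x, isX G x -> ~ in_orbit0 G x ->
         forall t t', xeq G (pif t) x -> xeq G (pif t') x -> t = t')
      /\ (forall x, isX G x -> in_orbit0 G x ->
         exists t1 t2, [/\ t1 <> t2, xeq G (pif t1) x, xeq G (pif t2) x &
                        forall t, xeq G (pif t) x -> t = t1 \/ t = t2])
    & (* f o pi_f extends continuously to X_f *)
      exists F : T -> R, continuous F /\
        forall t, ~ xeq G (pif t) x0 ->
          (inXplus G gam (pif t) -> F t = 1%R) /\
          (~ inXplus G gam (pif t) -> F t = (-1)%R)].

Definition point_distal {m} (T : topologicalType) (act : word m -> T -> T)
  (p : T -> nat -> letter m) : Prop :=
  exists x, closure (orbit act x) = setT /\
    forall x', x' <> x -> (forall k, p x' k = p x k) ->
      forall z, ~ closure [set st | exists g, reducedw g /\ st = (act g x, act g x')] (z, z).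

From Pilot Require Import Defs.
From HB Require Import structures.
From mathcomp Require Import all_boot all_order all_algebra.
From mathcomp Require Import all_classical all_reals topology normedtype.
Set Implicit Arguments. Unset Strict Implicit. Unset Printing Implicit Defensive.

(* Choose x in X_f above (b^oo, e), a point of X off the orbit of (a^oo, e), so
   that x is the only point of its pi_f-fibre.  Gamma acts on each finite
   quotient Gamma/Gamma_n by permutations, so Z is distal: if (x, x') is
   proximal, then pi_f x and pi_f x' have the same Z-coordinate.  When x and x'
   also have the same Y-coordinate, they lie in the same pi_f-fibre, so x' = x. *)

Local Notation wmul := Defs.mul.

Section FreeGroup.
Variable m : nat.
Implicit Types (x : letter m) (u v w g : word m).

Lemma linvK : involutive (@linv m).
Proof. by case=> i s; rewrite /linv /= negbK. Qed.

Lemma reducedw_cons x w :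
  reducedw (x :: w) = reducedw w && (if w is y :: _ then y != linv x else true).
Proof. by case: w => [|y w] //=; rewrite andbC. Qed.

Lemma reducedw_cons_red x w : reducedw w -> reducedw (cons_red x w).
Proof.
case: w => [|y w] // w_red /=; case: ifP => y_x; last by rewrite reducedw_cons w_red y_x.
by move: w_red; rewrite reducedw_cons => /andP[].
Qed.

Lemma reducedw_foldr w u : reducedw w -> reducedw (foldr cons_red w u).
Proof. by move=> w_red; elim: u => //= x u IH; apply: reducedw_cons_red. Qed.

Lemma reducedw_red w : reducedw (red w).
Proof. exact: reducedw_foldr. Qed.

Lemma reducedw_mul u v : reducedw (wmul u v).
Proof. exact: reducedw_red. Qed.

Lemma reducedw_winv u : reducedw u -> reducedw (winv u).
Proof.
have sortedE w : reducedw w = sorted (fun x y => y != linv x) w by case: w.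
rewrite !sortedE /winv rev_sorted sorted_map.
by case: u => //= x u; rewrite (@eq_path _ _ (fun x y => y != linv x)) // => y z;
  rewrite /relpre /= linvK eq_sym.
Qed.

Lemma cons_redK x w : reducedw w -> cons_red (linv x) (cons_red x w) = w.
Proof.
case: w => [|y w] /=; first by rewrite linvK eqxx.
case: ifP => [/eqP ->|_ _]; last by rewrite /= linvK eqxx.
by case: w => [|z w] //= /andP[]; rewrite linvK => /negbTE->.
Qed.

Lemma red_id w : reducedw w -> red w = w.
Proof.
elim: w => // x w IH; rewrite reducedw_cons => /andP[w_red w_x] /=.
by rewrite IH //; case: w w_x {IH w_red} => //= y w /negbTE->.
Qed.

Lemma red_cat u v : red (u ++ v) = foldr cons_red (red v) u.
Proof. by rewrite /red foldr_cat. Qed.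

Lemma foldr_cons_red w x u : reducedw w ->
  foldr cons_red w (cons_red x u) = cons_red x (foldr cons_red w u).
Proof.
move=> w_red; case: u => [|y u] //=; case: ifP => [/eqP ->|] //.
by rewrite -{1}[x]linvK cons_redK // reducedw_foldr.
Qed.

Lemma foldr_red w u : reducedw w -> foldr cons_red w (red u) = foldr cons_red w u.
Proof. by move=> w_red; elim: u => //= x u IH; rewrite foldr_cons_red // IH. Qed.

Lemma mulA u v w : wmul (wmul u v) w = wmul u (wmul v w).
Proof.
rewrite /Defs.mul [LHS]red_cat foldr_red ?reducedw_red //.
by rewrite red_cat (red_id (reducedw_red _)) red_cat foldr_cat.
Qed.

Lemma mul1w u : reducedw u -> wmul [::] u = u.
Proof. exact: red_id. Qed.

Lemma mulw1 u : reducedw u -> wmul u [::] = u.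
Proof. by move=> u_red; rewrite /Defs.mul cats0 red_id. Qed.

Lemma mulVw u : wmul (winv u) u = [::].
Proof.
rewrite /Defs.mul red_cat; elim: u => //= x u IH.
rewrite /winv /= rev_cons -cats1 foldr_cat /= cons_redK ?reducedw_foldr //.
Qed.

Lemma winvK : involutive (@winv m).
Proof. by move=> u; rewrite /winv map_rev revK -map_comp (eq_map linvK) map_id. Qed.

Lemma mulwV u : wmul u (winv u) = [::].
Proof. by rewrite -{1}[u]winvK mulVw. Qed.

Lemma winv_unique u v : reducedw u -> reducedw v -> wmul u v = [::] -> winv u = v.
Proof.
move=> u_red v_red uv1.
by rewrite -(mul1w v_red) -(mulVw u) mulA uv1 mulw1 // reducedw_winv.
Qed.

Lemma winv_ldiv u v : reducedw u -> reducedw v ->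
  winv (wmul (winv u) v) = wmul (winv v) u.
Proof.
move=> u_red v_red; apply: winv_unique; rewrite ?reducedw_mul //.
by rewrite mulA -(mulA v) mulwV mul1w // mulVw.
Qed.

Lemma mul_ldiv u v w : reducedw w ->
  wmul (wmul (winv u) v) (wmul (winv v) w) = wmul (winv u) w.
Proof. by move=> w_red; rewrite mulA -(mulA v) mulwV mul1w. Qed.

Lemma ldiv_mul2l g u v : reducedw u ->
  wmul (winv (wmul g u)) (wmul g v) = wmul (winv u) v.
Proof.
move=> u_red; rewrite -mulA; congr wmul; set k := winv (wmul g u).
rewrite -[wmul k g]mulw1 ?reducedw_mul // -(mulwV u) -mulA (mulA k) mulVw.
by rewrite mul1w // reducedw_winv.
Qed.

Definition subgroupw (H : word m -> Prop) : Prop :=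
  [/\ H [::],
      forall u v, reducedw u -> reducedw v -> H u -> H v -> H (wmul u v)
    & forall u, reducedw u -> H u -> H (winv u)].

End FreeGroup.

Lemma good_family_subgroupw m (G : nat -> word m -> Prop) :
  good_family G -> forall n, (1 <= n)%N -> subgroupw (G n).
Proof. by case=> Gsub _ _ n n1; have [] := Gsub n n1. Qed.

Section Cosets.
Variables (m : nat) (G : nat -> word m -> Prop) (n : nat).
Hypothesis Gn_sub : subgroupw (G n).
Implicit Types (u v w g : word m).

Lemma ceq_sym u v : reducedw u -> reducedw v -> ceq G n u v -> ceq G n v u.
Proof.
have [_ _ Ginv] := Gn_sub; move=> u_red v_red uv.
by rewrite /ceq -winv_ldiv //; apply: Ginv => //; apply: reducedw_mul.
Qed.

Lemma ceq_trans u v w : reducedw w -> ceq G n u v -> ceq G n v w -> ceq G n u w.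
Proof.
have [_ Gmul _] := Gn_sub; move=> w_red uv vw.
by rewrite /ceq -(mul_ldiv u v w_red); apply: Gmul; rewrite ?reducedw_mul.
Qed.

Lemma ceq_mul2l g u v : reducedw u -> ceq G n (wmul g u) (wmul g v) = ceq G n u v.
Proof. by move=> u_red; rewrite /ceq ldiv_mul2l. Qed.

End Cosets.

Local Open Scope classical_set_scope.

Lemma closure_diag_near (T : topologicalType) (S : set (T * T)) (z : T) (P : T -> Prop) :
  closure S (z, z) -> (\forall t \near z, P t) -> exists2 s, S s & P s.1 /\ P s.2.
Proof.
move=> zz_cl Pz; have [|s [Ss Ps]] := zz_cl [set s | P s.1 /\ P s.2]; last by exists s.
by exists (P, P) => // s [].
Qed.

Section ProximalZ.
Variables (m : nat) (G : nat -> word m -> Prop).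
Variables (T : topologicalType) (act : word m -> T -> T) (pif : T -> ptX m).
Hypothesis G_sub : forall n, (1 <= n)%N -> subgroupw (G n).
Hypothesis pif_Zreduced : forall t n, reducedw ((pif t).2 n).
Hypothesis pif_equivariant :
  forall g t, reducedw g -> xeq G (pif (act g t)) (actX g (pif t)).
Hypothesis pif_continuous : forall t N, \forall t' \near t, agreeX G N (pif t) (pif t').

Lemma proximal_ceqZ x x' z :
  closure [set st | exists g, reducedw g /\ st = (act g x, act g x')] (z, z) ->
  forall n, (1 <= n)%N -> ceq G n ((pif x).2 n) ((pif x').2 n).
Proof.
move=> zz_cl n n1; have Gn_sub := G_sub n1; have nn : (1 <= n <= n)%N by rewrite n1 leqnn.
have [_ [g [g_red ->]] [[_ z_gx] [_ z_gx']]] := closure_diag_near zz_cl (pif_continuous z n).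
have gx := (pif_equivariant x g_red).2 n n1; have gx' := (pif_equivariant x' g_red).2 n n1.
rewrite -(ceq_mul2l G n g _ (pif_Zreduced x n)).
apply: (ceq_trans Gn_sub (reducedw_mul _ _) _ gx').
apply: (ceq_trans Gn_sub (pif_Zreduced _ _) _ (z_gx' n nn)).
apply: (ceq_trans Gn_sub (pif_Zreduced _ _)
  (ceq_sym Gn_sub (pif_Zreduced _ _) (reducedw_mul _ _) gx)).
exact: (ceq_sym Gn_sub (pif_Zreduced _ _) (pif_Zreduced _ _) (z_gx n nn)).
Qed.

End ProximalZ.

Lemma actY_const m (g : word m) (c : letter m) n :
  (size g <= n)%N -> actY g (fun _ => c) n = c.
Proof. by move=> gn; rewrite /actY ltnNge (leq_trans (leq_subr _ _) gn). Qed.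

Definition xb {m} : ptX m := (fun _ => gb, fun _ => [::]).

Lemma isX_xb m (G : nat -> word m -> Prop) :
  (forall n, (1 <= n)%N -> subgroupw (G n)) -> isX G xb.
Proof.
move=> G_sub; split; first by move=> k; apply/eqP; case.
by split=> // n n1; have [] := G_sub n n1.
Qed.

Lemma xb_notin_orbit0 m (G : nat -> word m -> Prop) : ~ in_orbit0 G xb.
Proof. by move=> [g [_ [/(_ (size g)) /=]]]; rewrite actY_const. Qed.

Theorem lemma5p3 (m : nat) (G : nat -> word m -> Prop) (gam : nat -> word m)
  (R : realType) (T : pseudoMetricType R) (act : word m -> T -> T)
  (pif : T -> ptX m) :
  good_family G ->
  (forall n, (2 <= n)%N -> [/\ reducedw (gam n), G n.-1 (gam n) & ~ G n (gam n)]) ->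
  mcmahon G gam act pif ->
  point_distal act (fun t => (pif t).1).
Proof.
move=> /good_family_subgroupw G_sub _.
move=> [[_ _ _ minimal] [pifX [pif_equivariant [pif_continuous pif_onto]]] [fibre1 _] _].
have pif_Zreduced t n : reducedw ((pif t).2 n) by case: (pifX t) => _ [].
have [x pifx] := pif_onto _ (isX_xb G_sub).
exists x; split=> [|x' x'_neq_x sameY z proximal]; first exact: minimal.
apply/x'_neq_x/(fibre1 _ (isX_xb G_sub) (@xb_notin_orbit0 _ G) x' x _ pifx).
split=> [k|n n1]; first by rewrite sameY; apply: pifx.1.
apply: (ceq_trans (G_sub n n1) _ _ (pifx.2 n n1)) => //.
apply: (ceq_sym (G_sub n n1) (pif_Zreduced _ _) (pif_Zreduced _ _)).
exact: (proximal_ceqZ G_sub pif_Zreduced pif_equivariant pif_continuous proximal).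
Qed.
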